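(* Let $G$ be a graph, $n\ge1$, $v_0\in G$, $\mathbf{v}_0=(v_0,\dots,v_0)\in G^n$ and $\mathbf{x}_0=v_0^n\in G^{(n)}$. Let $\eta:G^n\to G^{(n)}$ be the graph map $\eta(v_1,\dots,v_n)=v_1\cdots v_n$. Then the induced homomorphism $\eta_*:A_1(G^n,\mathbf{v}_0)\to A_1(G^{(n)},\mathbf{x}_0)$, $[f]\mapsto[\eta\circ f]$, is surjective.
   Context: All graphs are connected, simple and locally finite. $G^n$ is the Cartesian (box) product graph; $G^{(n)}$ is the $n$th reduced power (vertices: degree-$n$ monomials in vertices of $G$, adjacent iff they differ by moving one token along one edge of $G$). $A_1(K,w_0)$ is the discrete fundamental group: classes of graph maps $f:\mathbb{Z}\to K$ from the integer path graph with $f(i)=w_0$ for $|i|$ large, modulo based homotopy (graph maps $\mathbb{Z}\,\square\,I_m\to K$ with based rows interpolating), with concatenation as product. *)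

From mathcomp Require Import all_boot all_order all_algebra.
From mathcomp Require Import finmap multiset.
From Stdlib Require Import Relations. From Stdlib Require List.
Set Implicit Arguments. Unset Strict Implicit. Unset Printing Implicit Defensive.
Import GRing.Theory Num.Theory.

Section Graphs.
Variables (V W : Type).

Definition simple_graph (adj : V -> V -> Prop) : Prop :=
  (forall x y, adj x y -> adj y x) /\ (forall x, ~ adj x x).

Definition connected_graph (adj : V -> V -> Prop) : Prop :=
  forall x y, clos_refl_trans V adj x y.

Definition locally_finite (adj : V -> V -> Prop) : Prop :=
  forall v, exists s : seq V, forall w, adj v w -> List.In w s.

Definition graph_map (adjV : V -> V -> Prop) (adjW : W -> W -> Prop)
  (f : V -> W) : Prop :=
  forall x y, adjV x y -> f x = f y \/ adjW (f x) (f y).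

Definition box_adj (adjV : V -> V -> Prop) (adjW : W -> W -> Prop)
  (p q : V * W) : Prop :=
  (adjV p.1 q.1 /\ p.2 = q.2) \/ (p.1 = q.1 /\ adjW p.2 q.2).
End Graphs.

Definition Zadj (i j : int) : Prop := j = (i + 1)%R \/ i = (j + 1)%R.

Definition Iadj (m : nat) (i j : 'I_m.+1) : Prop :=
  (j : nat) = i.+1 \/ (i : nat) = j.+1.

Section A1.
Variables (K : Type) (adjK : K -> K -> Prop) (w0 : K).

Definition based_path (f : int -> K) : Prop :=
  graph_map Zadj adjK f /\
  exists N : nat, forall i : int, (N <= absz i)%N -> f i = w0.

Definition based_homotopic (f g : int -> K) : Prop :=
  exists (m : nat) (H : int * 'I_m.+1 -> K),
    graph_map (box_adj Zadj (@Iadj m)) adjK H /\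
    (forall j : 'I_m.+1, based_path (fun i => H (i, j))) /\
    (forall i, H (i, ord0) = f i) /\
    (forall i, H (i, ord_max) = g i).
End A1.

Local Open Scope mset_scope.
Section Powers.
Variables (V : choiceType) (adj : V -> V -> Prop) (n : nat).

Definition pow_adj (x y : n.-tuple V) : Prop :=
  exists k : 'I_n, adj (tnth x k) (tnth y k) /\
    forall l : 'I_n, l != k -> tnth x l = tnth y l.

(* G^(n) : degree n monomials = multisets of size n *)
Definition redpow_vertex := {A : {mset V} | size A == n}.

Definition redpow_adj (x y : redpow_vertex) : Prop :=
  exists (v w : V) (M : {mset V}),
    adj v w /\ val x = (v +` M)%mset /\ val y = (w +` M)%mset.

Lemma size_seq_mset_tuple (t : n.-tuple V) : size (seq_mset t) == n.
Proof. by rewrite (perm_size (perm_eq_seq_mset t)) size_tuple. Qed.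

Definition eta (t : n.-tuple V) : redpow_vertex :=
  exist _ (seq_mset t) (size_seq_mset_tuple t).

Lemma size_msetn (v : V) : size (msetn n v) == n.
Proof.
have -> : msetn n v = seq_mset (nseq n v).
  by apply/msetP => x; rewrite mset_seqE msetnE count_nseq /= eq_sym; case: (v == x); rewrite ?muln0 ?muln1 ?mul1n ?mul0n.
by rewrite (perm_size (perm_eq_seq_mset _)) size_nseq.
Qed.

Definition redpow_base (v0 : V) : redpow_vertex :=
  exist _ (msetn n v0) (size_msetn v0).

Definition pow_base (v0 : V) : n.-tuple V := [tuple of nseq n v0].
End Powers.

From mathcomp Require Import all_boot all_order all_algebra.
From mathcomp Require Import finmap multiset zify.
From Stdlib Require Import ClassicalEpsilon.

(* We prove more: every based path g in G^(n) lifts on the nose, i.e. there is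
   a based path f in G^n with eta o f = g, so [g] = eta_*[f] via the constant
   homotopy.  The argument is a discrete path-lifting principle:
   - for any map p : X -> Y of graphs such that every step (or stay) in Y out of
     p x lifts to a step (or stay) in X out of x, and such that the fibre of p
     over the base point y0 is the single point x0, every based path in Y lifts
     to a based path in X (first along nat, then along Z);
   - eta has both properties: a move of one token v -> w in a monomial
     v M -> w M is realised by changing one coordinate equal to v into w, and
     the only tuple with monomial v0^n is (v0, ..., v0);
   - a based path is based-homotopic to any pointwise equal path (m = 0). *)

Local Open Scope mset_scope.

Definition lift_choice {X Y : Type} (adjX : X -> X -> Prop) (p : X -> Y)
    (x : X) (y : Y) : X :=
  epsilon (inhabits x) (fun x' => p x' = y /\ (x = x' \/ adjX x x')).

Section PathLifting.
Variables (X Y : Type) (adjX : X -> X -> Prop) (adjY : Y -> Y -> Prop).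
Variables (p : X -> Y) (x0 : X) (y0 : Y).

Hypothesis step_lift : forall {x y}, p x = y \/ adjY (p x) y ->
  exists x', p x' = y /\ (x = x' \/ adjX x x').
Hypothesis adjX_sym : forall x x', adjX x x' -> adjX x' x.
Hypothesis p_base : p x0 = y0.
Hypothesis base_fibre : forall x, p x = y0 -> x = x0.

Lemma nat_walk_lift (h : nat -> Y) :
  h 0 = p x0 -> (forall k, h k = h k.+1 \/ adjY (h k) (h k.+1)) ->
  exists F : nat -> X, F 0 = x0 /\ forall k,
    p (F k) = h k /\ (F k = F k.+1 \/ adjX (F k) (F k.+1)).
Proof.
move=> h0 hstep.
pose F := fix F k := if k is k'.+1 then lift_choice adjX p (F k') (h k) else x0.
have lift_spec k : p (F k) = h k ->
    p (F k.+1) = h k.+1 /\ (F k = F k.+1 \/ adjX (F k) (F k.+1)).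
  move=> hk; have hlift : p (F k) = h k.+1 \/ adjY (p (F k)) (h k.+1).
    by rewrite hk; exact: hstep.
  exact: epsilon_spec (step_lift hlift).
have over k : p (F k) = h k by elim: k => [|k /lift_spec []].
by exists F; split=> // k; split; [exact: over | case: (lift_spec k (over k))].
Qed.

Lemma based_path_lift (g : int -> Y) : based_path adjY y0 g ->
  exists f : int -> X, based_path adjX x0 f /\ forall i, p (f i) = g i.
Proof.
move=> [gmap [N gN]].
have gbase i : (i + N%:Z < 0)%R -> g i = y0 by move=> hi; apply: gN; lia.
have [F [F0 hF]] : exists F : nat -> X, F 0 = x0 /\ forall k,
    p (F k) = g (k%:Z - N%:Z)%R /\ (F k = F k.+1 \/ adjX (F k) (F k.+1)).
  apply: (nat_walk_lift (fun k => g (k%:Z - N%:Z)%R)).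
    by rewrite p_base gN //; lia.
  by move=> k; apply: gmap; left; lia.
pose f i := if (i + N%:Z)%R is Posz k then F k else x0.
have f_shift (k : nat) : f (k%:Z - N%:Z)%R = F k.
  by rewrite /f; have -> : (k%:Z - N%:Z + N%:Z)%R = Posz k by lia.
have f_neg i : (i + N%:Z < 0)%R -> f i = x0 by rewrite /f; case: (i + N%:Z)%R.
have int_cases i : (i + N%:Z < 0)%R \/ exists k : nat, i = (k%:Z - N%:Z)%R.
  case: (boolP (i + N%:Z < 0)%R) => hi; [by left | right].
  by exists (absz (i + N%:Z)%R); lia.
have f_over i : p (f i) = g i.
  case: (int_cases i) => [hi | [k ->]]; last by rewrite f_shift (proj1 (hF k)).
  by rewrite f_neg // p_base gbase.
have f_step i : f i = f (i + 1)%R \/ adjX (f i) (f (i + 1)%R).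
  case: (int_cases i) => [hi | [k ->]].
    rewrite f_neg //; left; case: (int_cases (i + 1)%R) => [hi' | [k e]].
      by rewrite f_neg.
    have k0 : k = 0%N by lia.
    by rewrite e k0 f_shift.
  have -> : (k%:Z - N%:Z + 1)%R = (k.+1%:Z - N%:Z)%R by lia.
  by rewrite !f_shift; case: (proj2 (hF k)); auto.
exists f; split=> //; split; last by exists N => i hi; apply: base_fibre; rewrite f_over gN.
move=> i j [->|->]; first exact: f_step.
by case: (f_step j) => [->|/adjX_sym]; auto.
Qed.
End PathLifting.
Arguments based_path_lift {X Y adjX adjY p x0 y0}.

Lemma based_homotopic_eqfun (K : Type) (adjK : K -> K -> Prop) (w0 : K)
    (f g : int -> K) :
  (forall i, f i = g i) -> based_path adjK w0 g -> based_homotopic adjK w0 f g.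
Proof.
move=> efg gpath; exists 0%N, (fun q => g q.1); split.
  by move=> q q' [[hq _]|[-> _]]; [exact: (proj1 gpath) | left].
by split; [move=> j | split].
Qed.

Section EtaLifting.
Variables (V : choiceType) (adj : V -> V -> Prop) (n : nat).

(* Moving one token v -> w of the monomial of t is realised by changing one
   coordinate of t equal to v into w. *)
Lemma eta_step_lift (t : n.-tuple V) (y : redpow_vertex V n) :
  eta t = y \/ redpow_adj adj (eta t) y ->
  exists t', eta t' = y /\ (t = t' \/ pow_adj adj t t').
Proof.
case=> [<-|[v [w [M [avw [/= ex ey]]]]]]; first by exists t; split=> //; left.
have vt : v \in tval t.
  by rewrite -has_pred1 has_count -mset_seqE ex mset1DE eqxx.
case: t ex vt => s hs /= ex vt.
move: hs ex; case/splitPr: vt => p1 p2 hs ex.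
have hs' : size (p1 ++ w :: p2) == n by rewrite !size_cat /= in hs *.
exists (Tuple hs'); split.
  apply/val_inj/msetP => a; rewrite /= mset_seqE ey mset1DE.
  have := congr1 (fun A : {mset V} => A a) ex.
  rewrite /= mset_seqE mset1DE !count_cat /= (eq_sym w) (eq_sym v); lia.
right; have kn : size p1 < n.
  by move/eqP: hs <-; rewrite size_cat /= addnS ltnS leq_addr.
exists (Ordinal kn); split; first by rewrite !(tnth_nth v) /= !nth_cat ltnn subnn.
move=> l hl; rewrite !(tnth_nth v) /= !nth_cat; case: ltnP => // hle.
have : l - size p1 != 0.
  rewrite subn_eq0 -ltnNge ltn_neqAle hle andbT.
  by apply: contra hl => /eqP e; apply/eqP/val_inj; rewrite /= e.
by case: (l - size p1).
Qed.

Lemma eta_base (v0 : V) : eta (pow_base n v0) = redpow_base n v0.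
Proof.
apply/val_inj => /=; apply/msetP => a; rewrite mset_seqE msetnE count_nseq /= eq_sym.
by case: (a == v0); rewrite ?mul0n ?mul1n.
Qed.

Lemma eta_base_fibre (v0 : V) (t : n.-tuple V) :
  eta t = redpow_base n v0 -> t = pow_base n v0.
Proof.
move/(congr1 val) => /= h; apply/val_inj => /=.
suff /all_pred1P -> : all (pred1 v0) t by rewrite size_tuple.
apply/allP => x xt; apply/eqP/eqP; apply: contraLR xt => hx.
by rewrite -has_pred1 has_count -leqNgt leqn0 -mset_seqE h msetnE (negbTE hx).
Qed.

Lemma pow_adj_sym : (forall x y, adj x y -> adj y x) ->
  forall t t' : n.-tuple V, pow_adj adj t t' -> pow_adj adj t' t.
Proof.
move=> adj_sym t t' [k [hk hl]]; exists k; split; first exact: adj_sym.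
by move=> l /hl ->.
Qed.
End EtaLifting.

Theorem lemma4p5 (V : choiceType) (adj : V -> V -> Prop)
  (Hsimple : simple_graph adj) (Hconn : connected_graph adj)
  (Hlf : locally_finite adj) (n : nat) (Hn : (1 <= n)%N) (v0 : V) :
  forall g : int -> redpow_vertex V n,
    based_path (redpow_adj adj (n:=n)) (redpow_base n v0) g ->
    exists f : int -> n.-tuple V,
      based_path (pow_adj adj (n:=n)) (pow_base n v0) f /\
      based_homotopic (redpow_adj adj (n:=n)) (redpow_base n v0)
        (fun i => eta (f i)) g.
Proof.
move=> g gpath.
have [f [fpath f_over]] := based_path_lift (@eta_step_lift V adj n)
  (@pow_adj_sym V adj n (proj1 Hsimple)) (@eta_base V n v0)
  (@eta_base_fibre V n v0) g gpath.
by exists f; split; last exact: based_homotopic_eqfun.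
Qed.
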